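(* Let $K$ be a Polish group admitting a compatible bi-invariant metric and let $\Gamma \leq K$ be a discrete subgroup. Let $(Z, d_Z)$ be a bounded Polish metric space on which $\Gamma$ acts faithfully by isometries. Then there exist a bounded Polish metric space $(Y, d_Y)$, a continuous, faithful, isometric action of $K$ on $Y$, and an isometric embedding $e \colon Z \to Y$ which is $\Gamma$-equivariant (i.e., $e(\gamma\cdot z)=\gamma\cdot e(z)$ for all $\gamma\in\Gamma$, $z\in Z$). *)

From Stdlib Require Import Reals.
Open Scope R_scope.

Definition is_metric {X : Type} (d : X -> X -> R) : Prop :=
  (forall x y, 0 <= d x y) /\
  (forall x y, d x y = 0 <-> x = y) /\
  (forall x y, d x y = d y x) /\
  (forall x y z, d x z <= d x y + d y z).

Definition metric_bounded {X : Type} (d : X -> X -> R) : Prop :=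
  exists M : R, forall x y, d x y <= M.

(** separable: there is a countable dense subset (allowing X empty) *)
Definition metric_separable {X : Type} (d : X -> X -> R) : Prop :=
  exists s : nat -> option X,
    forall (x : X) (eps : R), 0 < eps ->
      exists n y, s n = Some y /\ d x y < eps.

Definition cauchy_seq {X : Type} (d : X -> X -> R) (u : nat -> X) : Prop :=
  forall eps, 0 < eps -> exists N, forall m n, (N <= m)%nat -> (N <= n)%nat ->
    d (u m) (u n) < eps.

Definition seq_converges_to {X : Type} (d : X -> X -> R) (u : nat -> X) (l : X) : Prop :=
  forall eps, 0 < eps -> exists N, forall n, (N <= n)%nat -> d (u n) l < eps.

Definition metric_complete {X : Type} (d : X -> X -> R) : Prop :=
  forall u, cauchy_seq d u -> exists l, seq_converges_to d u l.

Definition polish_metric_space {X : Type} (d : X -> X -> R) : Prop :=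
  is_metric d /\ metric_separable d /\ metric_complete d.

Definition metric_open {X : Type} (d : X -> X -> R) (U : X -> Prop) : Prop :=
  forall x, U x -> exists eps, 0 < eps /\ forall y, d x y < eps -> U y.

Definition same_topology {X : Type} (d1 d2 : X -> X -> R) : Prop :=
  forall U : X -> Prop, metric_open d1 U <-> metric_open d2 U.

Definition polish_topology {X : Type} (d : X -> X -> R) : Prop :=
  metric_separable d /\
  exists d' : X -> X -> R, is_metric d' /\ metric_complete d' /\ same_topology d d'.

Record group_str (K : Type) := GroupStr {
  gmul : K -> K -> K;
  ginv : K -> K;
  gone : K;
  gmulA : forall x y z, gmul x (gmul y z) = gmul (gmul x y) z;
  gmul1l : forall x, gmul gone x = x;
  gmul1r : forall x, gmul x gone = x;
  gmulVl : forall x, gmul (ginv x) x = gone;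
  gmulVr : forall x, gmul x (ginv x) = gone
}.
Arguments gmul {K} g _ _.
Arguments ginv {K} g _.
Arguments gone {K} g.

Definition bi_invariant {K : Type} (G : group_str K) (d : K -> K -> R) : Prop :=
  forall g x y, d (gmul G g x) (gmul G g y) = d x y /\ d (gmul G x g) (gmul G y g) = d x y.

Definition topological_group_metric {K : Type} (G : group_str K) (d : K -> K -> R) : Prop :=
  (forall x y eps, 0 < eps -> exists delta, 0 < delta /\
     forall x' y', d x x' < delta -> d y y' < delta ->
       d (gmul G x y) (gmul G x' y') < eps) /\
  (forall x eps, 0 < eps -> exists delta, 0 < delta /\
     forall x', d x x' < delta -> d (ginv G x) (ginv G x') < eps).

Definition polish_group_biinv_metric {K : Type} (G : group_str K) (d : K -> K -> R) : Prop :=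
  is_metric d /\ topological_group_metric G d /\ polish_topology d /\ bi_invariant G d.

Definition is_subgroup {K : Type} (G : group_str K) (H : K -> Prop) : Prop :=
  H (gone G) /\ (forall x y, H x -> H y -> H (gmul G x y)) /\
  (forall x, H x -> H (ginv G x)).

Definition discrete_subset {K : Type} (d : K -> K -> R) (H : K -> Prop) : Prop :=
  forall g, H g -> exists eps, 0 < eps /\ forall h, H h -> d g h < eps -> h = g.

(** * Actions.  An action of the subgroup H on X is given by a map K -> X -> X
    of which only the values on elements of H matter. *)

Definition is_action_on {K X : Type} (G : group_str K) (H : K -> Prop)
  (act : K -> X -> X) : Prop :=
  (forall x, act (gone G) x = x) /\
  (forall g h x, H g -> H h -> act (gmul G g h) x = act g (act h x)).

Definition action_faithful_on {K X : Type} (G : group_str K) (H : K -> Prop)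
  (act : K -> X -> X) : Prop :=
  forall g, H g -> (forall x, act g x = x) -> g = gone G.

Definition action_isometric_on {K X : Type} (H : K -> Prop) (d : X -> X -> R)
  (act : K -> X -> X) : Prop :=
  forall g x y, H g -> d (act g x) (act g y) = d x y.

Definition action_continuous {K X : Type} (dK : K -> K -> R) (dX : X -> X -> R)
  (act : K -> X -> X) : Prop :=
  forall g x eps, 0 < eps -> exists delta, 0 < delta /\
    forall g' x', dK g g' < delta -> dX x x' < delta ->
      dX (act g x) (act g' x') < eps.

Definition whole {K : Type} : K -> Prop := fun _ => True.

(* Let Z+ be Z with one extra point at distance M (a bound for dZ) from Z, and let
   rho be the bi-invariant metric dK truncated at a radius eps0 within which [one] is
   isolated in Gamma, rescaled so that its plateau value is M.  Y is the completion of
   the quotient of K * Z+ (max metric) by the right action (k, a).g = (k g, g^-1 a) of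
   Gamma; right invariance of rho makes the quotient distance a pseudometric, and K acts
   by left translation on the first factor, isometrically by left invariance and
   continuously since rho is Lipschitz.  z |-> [one, z] is isometric because every
   g <> one in Gamma has rho g one = M >= dZ.  If g acts trivially then [g, a] = [one, a]
   for all a; by discreteness the elements h of Gamma witnessing this are all equal, so
   g h = one and h fixes Z, whence h = one = g. *)

From Stdlib Require Import Reals Lra Lia Cantor.
From Stdlib Require Import ClassicalEpsilon ProofIrrelevance FunctionalExtensionality
  PropExtensionality.
Open Scope R_scope.

Definition lim_of (u : nat -> R) : R :=
  match excluded_middle_informative (exists l, Un_cv u l) with
  | left H => proj1_sig (constructive_indefinite_description _ H)
  | right _ => 0
  end.

Lemma lim_of_spec u l : Un_cv u l -> lim_of u = l.
Proof.
  intro Hu. unfold lim_of. destruct excluded_middle_informative as [H | H].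
  - destruct constructive_indefinite_description as [l' Hl']; simpl.
    exact (UL_sequence _ _ _ Hl' Hu).
  - exfalso; apply H; eauto.
Qed.

Lemma Un_cv_const c : Un_cv (fun _ => c) c.
Proof. intros e He. exists 0%nat. intros. unfold Rdist. rewrite Rminus_diag, Rabs_R0. lra. Qed.

Lemma Un_cv_le_eventually u v l m : Un_cv u l -> Un_cv v m ->
  (exists N, forall n, (N <= n)%nat -> u n <= v n) -> l <= m.
Proof.
  intros Hu Hv [N HN].
  destruct (Rle_or_lt l m) as [| Hlt]; auto. exfalso.
  destruct (Hu ((l - m) / 2)) as [N1 H1]; [lra |].
  destruct (Hv ((l - m) / 2)) as [N2 H2]; [lra |].
  specialize (H1 (N + N1 + N2)%nat ltac:(lia)). specialize (H2 (N + N1 + N2)%nat ltac:(lia)).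
  specialize (HN (N + N1 + N2)%nat ltac:(lia)).
  unfold Rdist in *. apply Rabs_def2 in H1. apply Rabs_def2 in H2. lra.
Qed.

Lemma inv_INR_S_eventually_lt e : 0 < e -> exists N, forall n, (N <= n)%nat -> / INR (S n) < e.
Proof.
  intro He. destruct (archimed_cor1 e He) as [N [HNe HN]]. exists N. intros n Hn.
  apply Rle_lt_trans with (/ INR N); auto.
  apply Rinv_le_contravar; [apply lt_0_INR; lia | apply le_INR; lia].
Qed.

Definition sup_of (E : R -> Prop) : R :=
  match excluded_middle_informative (bound E /\ exists x, E x) with
  | left H => proj1_sig (completeness E (proj1 H) (proj2 H))
  | right _ => 0
  end.

Lemma sup_of_spec E : bound E -> (exists x, E x) -> is_lub E (sup_of E).
Proof.
  intros Hb Hne. unfold sup_of. destruct excluded_middle_informative as [H | H].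
  - apply proj2_sig.
  - tauto.
Qed.

Definition inf_on {A : Type} (P : A -> Prop) (F : A -> R) : R :=
  - sup_of (fun y => exists a, P a /\ y = - F a).

Section Infimum.
Variables (A : Type) (P : A -> Prop) (F : A -> R).
Hypothesis P_inhabited : exists a, P a.
Hypothesis F_nonneg : forall a, P a -> 0 <= F a.

Lemma inf_on_lub : is_lub (fun y => exists a, P a /\ y = - F a) (- inf_on P F).
Proof.
  unfold inf_on. rewrite Ropp_involutive. apply sup_of_spec.
  - exists 0. intros y [a [Ha ->]]. specialize (F_nonneg a Ha). lra.
  - destruct P_inhabited as [a Ha]. exists (- F a). exists a. auto.
Qed.

Lemma inf_on_le a : P a -> inf_on P F <= F a.
Proof.
  intro Ha. destruct inf_on_lub as [Hub _].
  assert (T := Hub (- F a) (ex_intro _ a (conj Ha eq_refl))). lra.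
Qed.

Lemma inf_on_glb c : (forall a, P a -> c <= F a) -> c <= inf_on P F.
Proof.
  intro Hc. destruct inf_on_lub as [_ Hlub].
  assert (- inf_on P F <= - c); [| lra].
  apply Hlub. intros y [a [Ha ->]]. specialize (Hc a Ha). lra.
Qed.

Lemma inf_on_approx e : 0 < e -> exists a, P a /\ F a < inf_on P F + e.
Proof.
  intro He. apply NNPP. intro Hno.
  assert (inf_on P F + e <= inf_on P F); [| lra].
  apply inf_on_glb. intros a Ha. apply Rnot_lt_le. intro Hlt. eauto.
Qed.

End Infimum.

Lemma cauchy_seq_close {X} (d : X -> X -> R) u v : is_metric d ->
  (forall n, d (u n) (v n) <= / INR (S n)) -> cauchy_seq d u -> cauchy_seq d v.
Proof.
  intros [_ [_ [Hsym Htri]]] Huv Hu e He.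
  destruct (inv_INR_S_eventually_lt (e / 3)) as [N1 HN1]; [lra |].
  destruct (Hu (e / 3)) as [N2 HN2]; [lra |].
  exists (N1 + N2)%nat. intros m n Hm Hn.
  assert (T1 := Htri (v m) (u m) (v n)). assert (T2 := Htri (u m) (u n) (v n)).
  rewrite (Hsym (v m) (u m)) in T1.
  assert (Huvm := Huv m). assert (Huvn := Huv n).
  assert (Hm1 := HN1 m ltac:(lia)). assert (Hn1 := HN1 n ltac:(lia)).
  specialize (HN2 m n ltac:(lia) ltac:(lia)). lra.
Qed.

Lemma seq_converges_close {X} (d : X -> X -> R) u v l : is_metric d ->
  (forall n, d (u n) (v n) <= / INR (S n)) -> seq_converges_to d v l -> seq_converges_to d u l.
Proof.
  intros [_ [_ [_ Htri]]] Huv Hv e He.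
  destruct (inv_INR_S_eventually_lt (e / 2)) as [N1 HN1]; [lra |].
  destruct (Hv (e / 2)) as [N2 HN2]; [lra |].
  exists (N1 + N2)%nat. intros n Hn.
  assert (T := Htri (u n) (v n) l). specialize (Huv n).
  specialize (HN1 n ltac:(lia)). specialize (HN2 n ltac:(lia)). lra.
Qed.

Definition is_pseudometric {X : Type} (p : X -> X -> R) : Prop :=
  (forall x, p x x = 0) /\ (forall x y, p x y = p y x) /\
  (forall x y z, p x z <= p x y + p y z).

Section Completion.
Variables (B : Type) (p : B -> B -> R).
Hypothesis Hp : is_pseudometric p.

Let p_refl : forall x, p x x = 0 := proj1 Hp.
Let p_sym : forall x y, p x y = p y x := proj1 (proj2 Hp).
Let p_tri : forall x y z, p x z <= p x y + p y z := proj2 (proj2 Hp).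

Lemma pseudometric_nonneg x y : 0 <= p x y.
Proof. assert (T := p_tri x y x). rewrite p_refl, (p_sym y x) in T. lra. Qed.

Definition cauchy (u : nat -> B) : Prop := cauchy_seq p u.

Lemma cauchy_dist_Cauchy_crit u v : cauchy u -> cauchy v ->
  Cauchy_crit (fun n => p (u n) (v n)).
Proof.
  intros Hu Hv e He.
  destruct (Hu (e / 2)) as [N1 H1]; [lra |]. destruct (Hv (e / 2)) as [N2 H2]; [lra |].
  exists (N1 + N2)%nat. intros n m Hn Hm. unfold Rdist.
  specialize (H1 n m ltac:(lia) ltac:(lia)). specialize (H2 n m ltac:(lia) ltac:(lia)).
  assert (T1 := p_tri (u n) (u m) (v n)). assert (T2 := p_tri (u m) (v m) (v n)).
  assert (T3 := p_tri (u m) (u n) (v m)). assert (T4 := p_tri (u n) (v n) (v m)).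
  rewrite (p_sym (u m) (u n)) in T3. rewrite (p_sym (v m) (v n)) in T2.
  apply Rabs_def1; lra.
Qed.

Definition seq_dist (u v : nat -> B) : R := lim_of (fun n => p (u n) (v n)).

Lemma seq_dist_cv u v : cauchy u -> cauchy v -> Un_cv (fun n => p (u n) (v n)) (seq_dist u v).
Proof.
  intros Hu Hv. destruct (R_complete _ (cauchy_dist_Cauchy_crit u v Hu Hv)) as [l Hl].
  unfold seq_dist. rewrite (lim_of_spec _ l Hl). exact Hl.
Qed.

Lemma seq_dist_le u v c : cauchy u -> cauchy v ->
  (exists N, forall n, (N <= n)%nat -> p (u n) (v n) <= c) -> seq_dist u v <= c.
Proof. intros Hu Hv Hc. exact (Un_cv_le_eventually _ _ _ _ (seq_dist_cv u v Hu Hv) (Un_cv_const c) Hc). Qed.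

Lemma seq_dist_nonneg u v : cauchy u -> cauchy v -> 0 <= seq_dist u v.
Proof.
  intros Hu Hv. apply (Un_cv_le_eventually _ _ _ _ (Un_cv_const 0) (seq_dist_cv u v Hu Hv)).
  exists 0%nat. intros. apply pseudometric_nonneg.
Qed.

Lemma seq_dist_sym u v : seq_dist u v = seq_dist v u.
Proof. unfold seq_dist. f_equal. apply functional_extensionality. intro; auto. Qed.

Lemma seq_dist_refl u : seq_dist u u = 0.
Proof.
  unfold seq_dist. apply lim_of_spec.
  apply (Un_cv_ext (fun _ => 0)); [intro; auto | apply Un_cv_const].
Qed.

Lemma seq_dist_tri u v w : cauchy u -> cauchy v -> cauchy w ->
  seq_dist u w <= seq_dist u v + seq_dist v w.
Proof.
  intros. eapply Un_cv_le_eventually; [apply seq_dist_cv; auto | apply CV_plus; apply seq_dist_cv; auto |].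
  exists 0%nat; auto.
Qed.

Lemma seq_dist_congr u u' v v' : cauchy u -> cauchy u' -> cauchy v -> cauchy v' ->
  seq_dist u u' = 0 -> seq_dist v v' = 0 -> seq_dist u v = seq_dist u' v'.
Proof.
  intros Hu Hu' Hv Hv' Huu' Hvv'.
  assert (T1 := seq_dist_tri u' u v Hu' Hu Hv). assert (T2 := seq_dist_tri u' v v' Hu' Hv Hv').
  assert (T3 := seq_dist_tri u u' v' Hu Hu' Hv'). assert (T4 := seq_dist_tri u v' v Hu Hv' Hv).
  rewrite (seq_dist_sym u' u) in T1. rewrite (seq_dist_sym v' v) in T4. lra.
Qed.

Lemma cauchy_const b : cauchy (fun _ => b).
Proof. intros e He. exists 0%nat. intros. rewrite p_refl. lra. Qed.

Lemma seq_dist_const a b : seq_dist (fun _ => a) (fun _ => b) = p a b.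
Proof. apply lim_of_spec, Un_cv_const. Qed.

Lemma cauchy_map f u : (forall a b, p (f a) (f b) = p a b) -> cauchy u -> cauchy (fun n => f (u n)).
Proof. intros Hf Hu e He. destruct (Hu e He) as [N HN]. exists N. intros. rewrite Hf. auto. Qed.

Lemma seq_dist_map f u v : (forall a b, p (f a) (f b) = p a b) ->
  seq_dist (fun n => f (u n)) (fun n => f (v n)) = seq_dist u v.
Proof. intro Hf. unfold seq_dist. f_equal. apply functional_extensionality. intro; auto. Qed.

(* A point of the completion is the class of a Cauchy sequence, represented as the set
   of Cauchy sequences at distance 0 from it; this also identifies points at
   pseudo-distance 0. *)
Definition seq_class (u : nat -> B) (v : nat -> B) : Prop := cauchy v /\ seq_dist u v = 0.

Definition completion : Type := {S : (nat -> B) -> Prop | exists u, cauchy u /\ S = seq_class u}.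

Definition rep (y : completion) : nat -> B :=
  proj1_sig (constructive_indefinite_description _ (proj2_sig y)).

Lemma rep_spec y : cauchy (rep y) /\ proj1_sig y = seq_class (rep y).
Proof. unfold rep. destruct constructive_indefinite_description; simpl; auto. Qed.

Lemma rep_cauchy y : cauchy (rep y).
Proof. apply rep_spec. Qed.

Definition of_cauchy (u : nat -> B) (Hu : cauchy u) : completion :=
  exist _ (seq_class u) (ex_intro _ u (conj Hu eq_refl)).

Definition cdist (y y' : completion) : R := seq_dist (rep y) (rep y').

Lemma seq_class_eq u v : cauchy u -> cauchy v -> seq_dist u v = 0 -> seq_class u = seq_class v.
Proof.
  intros Hu Hv H0. apply functional_extensionality. intro w.
  apply propositional_extensionality. unfold seq_class.
  split; intros [Hw Hd]; split; auto.
  - assert (T := seq_dist_tri v u w Hv Hu Hw). rewrite seq_dist_sym in H0.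
    assert (0 <= seq_dist v w) by (apply seq_dist_nonneg; auto). lra.
  - assert (T := seq_dist_tri u v w Hu Hv Hw).
    assert (0 <= seq_dist u w) by (apply seq_dist_nonneg; auto). lra.
Qed.

Lemma completion_eq y y' : cdist y y' = 0 -> y = y'.
Proof.
  intro H0. destruct (rep_spec y) as [C1 E1]. destruct (rep_spec y') as [C2 E2].
  assert (proj1_sig y = proj1_sig y') by (rewrite E1, E2; apply seq_class_eq; auto).
  destruct y as [S HS], y' as [S' HS']. simpl in *. subst S'. f_equal. apply proof_irrelevance.
Qed.

Lemma rep_of_cauchy u v Hu : u = v -> seq_dist (rep (of_cauchy u Hu)) v = 0.
Proof.
  intros <-. destruct (rep_spec (of_cauchy u Hu)) as [_ E]. simpl in E.
  assert (Hc : seq_class u u) by (split; auto; apply seq_dist_refl).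
  rewrite E in Hc. apply Hc.
Qed.

Lemma cdist_of_cauchy u v Hu Hv : cdist (of_cauchy u Hu) (of_cauchy v Hv) = seq_dist u v.
Proof. apply seq_dist_congr; auto using rep_cauchy, rep_of_cauchy. Qed.

Lemma cdist_metric : is_metric cdist.
Proof.
  unfold cdist. split; [| split; [| split]].
  - intros; apply seq_dist_nonneg; apply rep_cauchy.
  - intros x y; split; [apply completion_eq | intros ->; apply seq_dist_refl].
  - intros; apply seq_dist_sym.
  - intros; apply seq_dist_tri; apply rep_cauchy.
Qed.

Lemma cdist_bounded M : (forall a b, p a b <= M) -> metric_bounded cdist.
Proof. intro HM. exists M. intros. apply seq_dist_le; try apply rep_cauchy. exists 0%nat; auto. Qed.

Definition embed (b : B) : completion := of_cauchy (fun _ => b) (cauchy_const b).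

Lemma cdist_embed a b : cdist (embed a) (embed b) = p a b.
Proof. unfold embed. rewrite cdist_of_cauchy. apply seq_dist_const. Qed.

Lemma embed_eq a b : p a b = 0 -> embed a = embed b.
Proof. intro H. apply completion_eq. rewrite cdist_embed; auto. Qed.

Lemma cdist_embed_of_cauchy a v Hv : cdist (embed a) (of_cauchy v Hv) = seq_dist (fun _ => a) v.
Proof. apply cdist_of_cauchy. Qed.

Lemma embed_dense y e : 0 < e -> exists b, cdist y (embed b) <= e.
Proof.
  intro He. destruct (rep_cauchy y e He) as [N HN]. exists (rep y N).
  unfold cdist, embed. rewrite (seq_dist_congr (rep y) (rep y) (rep (of_cauchy _ (cauchy_const (rep y N)))) (fun _ => rep y N));
    auto using rep_cauchy, cauchy_const, seq_dist_refl, rep_of_cauchy.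
  apply seq_dist_le; auto using rep_cauchy, cauchy_const.
  exists N. intros n Hn. left. apply HN; auto.
Qed.

Lemma embed_converges u Hu : seq_converges_to cdist (fun n => embed (u n)) (of_cauchy u Hu).
Proof.
  intros e He. destruct (Hu (e / 2)) as [N HN]; [lra |]. exists N. intros n Hn.
  rewrite cdist_embed_of_cauchy. apply Rle_lt_trans with (e / 2); [| lra].
  apply seq_dist_le; auto using cauchy_const.
  exists N. intros m Hm. left. apply HN; auto.
Qed.

Lemma cdist_separable : metric_separable p -> metric_separable cdist.
Proof.
  intros [s Hs].
  exists (fun n => match s n with Some b => Some (embed b) | None => None end).
  intros y e He.
  destruct (embed_dense y (e / 3)) as [a Ha]; [lra |].
  destruct (Hs a (e / 3)) as [n [b [Hsn Hab]]]; [lra |].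
  exists n, (embed b). split; [rewrite Hsn; auto |].
  assert (T := proj2 (proj2 (proj2 cdist_metric)) y (embed a) (embed b)).
  rewrite cdist_embed in T. lra.
Qed.

Lemma cdist_complete : metric_complete cdist.
Proof.
  intros u Hu.
  assert (Hdense : forall n, exists b, cdist (u n) (embed b) <= / INR (S n)).
  { intro n. apply embed_dense, Rinv_0_lt_compat, lt_0_INR. lia. }
  destruct (choice _ Hdense) as [b Hb].
  assert (Hcb : cauchy b).
  { intros e He.
    destruct (cauchy_seq_close cdist u (fun n => embed (b n)) cdist_metric Hb Hu e He) as [N HN].
    exists N. intros. rewrite <- cdist_embed. auto. }
  exists (of_cauchy b Hcb).
  apply (seq_converges_close _ _ _ _ cdist_metric Hb), embed_converges.
Qed.

Definition completion_map (f : B -> B) (Hf : forall a b, p (f a) (f b) = p a b)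
  (y : completion) : completion :=
  of_cauchy (fun n => f (rep y n)) (cauchy_map f _ Hf (rep_cauchy y)).

Lemma rep_completion_map f Hf y :
  seq_dist (rep (completion_map f Hf y)) (fun n => f (rep y n)) = 0.
Proof. apply rep_of_cauchy; reflexivity. Qed.

Lemma completion_map_isometry f Hf y y' :
  cdist (completion_map f Hf y) (completion_map f Hf y') = cdist y y'.
Proof. unfold completion_map. rewrite cdist_of_cauchy. apply seq_dist_map; auto. Qed.

Lemma completion_map_comp f Hf g Hg h Hh y : (forall b, h b = f (g b)) ->
  completion_map f Hf (completion_map g Hg y) = completion_map h Hh y.
Proof.
  intro Hfg. apply completion_eq. unfold cdist.
  rewrite (seq_dist_congr _ (fun n => f (rep (completion_map g Hg y) n))
             _ (fun n => h (rep y n)));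
    auto using rep_cauchy, cauchy_map, rep_completion_map.
  assert (E : (fun n => h (rep y n)) = (fun n => f (g (rep y n))))
      by (apply functional_extensionality; auto).
  rewrite E, seq_dist_map; auto. apply rep_completion_map.
Qed.

Lemma completion_map_id f Hf y : (forall b, f b = b) -> completion_map f Hf y = y.
Proof.
  intro Hid. apply completion_eq. unfold cdist.
  rewrite (seq_dist_congr _ (fun n => f (rep y n)) _ (rep y));
    auto using rep_cauchy, cauchy_map, rep_completion_map, seq_dist_refl.
  rewrite (functional_extensionality _ (rep y) (fun n => Hid (rep y n))). apply seq_dist_refl.
Qed.

Lemma completion_map_embed f Hf b : completion_map f Hf (embed b) = embed (f b).
Proof.
  apply completion_eq. unfold cdist.
  rewrite (seq_dist_congr _ (fun n => f (rep (embed b) n)) _ (fun n => f b));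
    auto using rep_cauchy, cauchy_map, cauchy_const, rep_completion_map.
  2: apply rep_of_cauchy; reflexivity.
  change (fun _ : nat => f b) with (fun n : nat => f ((fun _ : nat => b) n)).
  rewrite seq_dist_map; auto. apply rep_of_cauchy; reflexivity.
Qed.

Lemma completion_map_close f Hf g Hg y c : (forall b, p (f b) (g b) <= c) ->
  cdist (completion_map f Hf y) (completion_map g Hg y) <= c.
Proof.
  intro Hc. unfold completion_map. rewrite cdist_of_cauchy.
  apply seq_dist_le; auto using cauchy_map, rep_cauchy. exists 0%nat; auto.
Qed.

End Completion.

Section MetricFacts.
Variables (X : Type) (d : X -> X -> R).
Hypothesis Hd : is_metric d.

Lemma metric_nonneg x y : 0 <= d x y.
Proof. apply Hd. Qed.
Lemma metric_refl x : d x x = 0.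
Proof. apply Hd; auto. Qed.
Lemma metric_eq x y : d x y = 0 -> x = y.
Proof. apply Hd. Qed.
Lemma metric_sym x y : d x y = d y x.
Proof. apply Hd. Qed.
Lemma metric_tri x y z : d x z <= d x y + d y z.
Proof. apply Hd. Qed.

End MetricFacts.

Section TruncatedMetric.
Variables (X : Type) (d : X -> X -> R) (M r : R).
Hypotheses (Hd : is_metric d) (HM : 0 < M) (Hr : 0 < r).

Definition truncated_dist (x y : X) : R := M / r * Rmin (d x y) r.

Lemma truncated_scale_pos : 0 < M / r.
Proof. apply Rdiv_lt_0_compat; auto. Qed.

Lemma truncated_dist_metric : is_metric truncated_dist.
Proof.
  assert (Hc := truncated_scale_pos). unfold truncated_dist.
  split; [| split; [| split]].
  - intros x y. apply Rmult_le_pos; [lra |].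
    apply Rmin_glb; [apply (metric_nonneg _ _ Hd) | lra].
  - intros x y. split.
    + intro H0. apply Rmult_integral in H0 as [H0 | H0]; [lra |].
      apply (metric_eq _ _ Hd). unfold Rmin in H0. destruct Rle_dec; lra.
    + intros ->. rewrite (metric_refl _ _ Hd). unfold Rmin. destruct Rle_dec; lra.
  - intros x y. rewrite (metric_sym _ _ Hd). reflexivity.
  - intros x y z. rewrite <- Rmult_plus_distr_l. apply Rmult_le_compat_l; [lra |].
    assert (T := metric_tri _ _ Hd x y z).
    assert (T1 := metric_nonneg _ _ Hd x y). assert (T2 := metric_nonneg _ _ Hd y z).
    unfold Rmin; repeat destruct Rle_dec; lra.
Qed.

Lemma truncated_dist_le x y : truncated_dist x y <= M.
Proof.
  assert (Hc := truncated_scale_pos). unfold truncated_dist.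
  apply Rle_trans with (M / r * r); [apply Rmult_le_compat_l; [lra | apply Rmin_r] |].
  right. field. lra.
Qed.

Lemma truncated_dist_far x y : r <= d x y -> truncated_dist x y = M.
Proof.
  intro H. unfold truncated_dist, Rmin. destruct Rle_dec; [replace (d x y) with r by lra |];
    field; lra.
Qed.

Lemma truncated_dist_lipschitz x y : truncated_dist x y <= M / r * d x y.
Proof. apply Rmult_le_compat_l; [left; apply truncated_scale_pos | apply Rmin_l]. Qed.

Lemma truncated_dist_lt_half x y : truncated_dist x y < M / 2 -> d x y < r / 2.
Proof.
  assert (Hc := truncated_scale_pos). unfold truncated_dist, Rmin. destruct Rle_dec; intro H.
  - apply Rmult_lt_reg_l with (M / r); auto.
    replace (M / r * (r / 2)) with (M / 2) by (field; lra). exact H.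
  - replace (M / r * r) with M in H by (field; lra). lra.
Qed.

End TruncatedMetric.

Arguments truncated_dist {X}.

Section AdjoinedPoint.
Variables (X : Type) (d : X -> X -> R) (M : R).
Hypotheses (Hd : is_metric d) (HM : 0 < M) (Hbound : forall x y, d x y <= M).

Definition dist_opt (a b : option X) : R :=
  match a, b with
  | Some x, Some y => d x y
  | None, None => 0
  | _, _ => M
  end.

Lemma dist_opt_metric : is_metric dist_opt.
Proof.
  split; [| split; [| split]].
  - intros [x |] [y |]; simpl; try lra. apply (metric_nonneg _ _ Hd).
  - intros [x |] [y |]; simpl; split; intro H; try lra; try congruence.
    + f_equal. apply (metric_eq _ _ Hd), H.
    + injection H as ->. apply (metric_refl _ _ Hd).
  - intros [x |] [y |]; simpl; auto. apply (metric_sym _ _ Hd).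
  - intros [x |] [y |] [z |]; simpl; try apply (metric_tri _ _ Hd);
      try (pose proof (metric_nonneg _ _ Hd x y)); try (pose proof (metric_nonneg _ _ Hd y z));
      try (pose proof (Hbound x z)); lra.
Qed.

Lemma dist_opt_le a b : dist_opt a b <= M.
Proof. destruct a, b; simpl; auto; lra. Qed.

Lemma dist_opt_separable : metric_separable d -> metric_separable dist_opt.
Proof.
  intros [s Hs].
  exists (fun n => match n with O => Some None | S n => option_map Some (s n) end).
  intros [x |] e He.
  - destruct (Hs x e He) as [n [y [Hn Hy]]]. exists (S n), (Some y). rewrite Hn. auto.
  - exists O, None. simpl. auto.
Qed.

End AdjoinedPoint.

Arguments dist_opt {X}.

Section Construction.
Variables (K : Type) (G : group_str K) (dK : K -> K -> R).
Hypotheses (HdK : is_metric dK) (Hbi : bi_invariant G dK).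
Variable Gamma : K -> Prop.
Hypothesis HGsub : is_subgroup G Gamma.
Variable eps0 : R.
Hypothesis Heps0 : 0 < eps0.
Hypothesis Gamma_isolated_one : forall h, Gamma h -> dK (gone G) h < eps0 -> h = gone G.
Variables (Z : Type) (dZ : Z -> Z -> R) (Mz : R).
Hypotheses (HdZ : is_metric dZ) (HMz : 0 < Mz) (HMz_bound : forall z z', dZ z z' <= Mz).
Variable actZ : K -> Z -> Z.
Hypotheses (HactZ : is_action_on G Gamma actZ) (HisoZ : action_isometric_on Gamma dZ actZ).

Notation mul := (gmul G).
Notation one := (gone G).
Notation inv := (ginv G).

Lemma Gamma_one : Gamma one.
Proof. apply HGsub. Qed.
Lemma Gamma_mul x y : Gamma x -> Gamma y -> Gamma (mul x y).
Proof. apply HGsub. Qed.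
Lemma Gamma_inv x : Gamma x -> Gamma (inv x).
Proof. apply HGsub. Qed.

Definition rho : K -> K -> R := truncated_dist dK Mz eps0.

Lemma rho_metric : is_metric rho.
Proof. apply truncated_dist_metric; auto. Qed.

Lemma rho_mul_l g x y : rho (mul g x) (mul g y) = rho x y.
Proof. unfold rho, truncated_dist. rewrite (proj1 (Hbi g x y)). reflexivity. Qed.

Lemma rho_mul_r g x y : rho (mul x g) (mul y g) = rho x y.
Proof. unfold rho, truncated_dist. rewrite (proj2 (Hbi g x y)). reflexivity. Qed.

(* The extra point [None] keeps a copy of [K / Gamma] in the space even when [Z] is
   empty. *)
Definition dZp : option Z -> option Z -> R := dist_opt dZ Mz.

Definition actZp (g : K) : option Z -> option Z := option_map (actZ g).

Lemma dZp_metric : is_metric dZp.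
Proof. apply dist_opt_metric; auto. Qed.

Lemma actZp_isometry g a b : Gamma g -> dZp (actZp g a) (actZp g b) = dZp a b.
Proof. intro Hg. destruct a, b; simpl; auto. Qed.

Lemma actZp_one a : actZp one a = a.
Proof. destruct a; simpl; auto. f_equal. apply HactZ. Qed.

Lemma actZp_mul g h a : Gamma g -> Gamma h -> actZp (mul g h) a = actZp g (actZp h a).
Proof. intros. destruct a; simpl; auto. f_equal. apply HactZ; auto. Qed.

Definition B : Type := (K * option Z)%type.

(* [pdist] is the quotient pseudometric of [K * option Z] (with the max metric) by
   the right action (k, a).g = (k g, g^-1 a) of [Gamma]. *)
Definition cost (x x' : B) (g : K) : R :=
  Rmax (rho (mul (fst x) g) (fst x')) (dZp (snd x) (actZp g (snd x'))).

Definition pdist (x x' : B) : R := inf_on Gamma (cost x x').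

Lemma cost_nonneg x x' g : 0 <= cost x x' g.
Proof. apply Rle_trans with (2 := Rmax_l _ _). apply (metric_nonneg _ _ rho_metric). Qed.

Lemma cost_one x x' : cost x x' one = Rmax (rho (fst x) (fst x')) (dZp (snd x) (snd x')).
Proof. unfold cost. rewrite (gmul1r _ G), actZp_one. reflexivity. Qed.

Lemma cost_inv x x' g : Gamma g -> cost x' x (inv g) = cost x x' g.
Proof.
  intro Hg. unfold cost. f_equal.
  - rewrite <- (rho_mul_r g), <- (gmulA _ G), (gmulVl _ G), (gmul1r _ G).
    apply (metric_sym _ _ rho_metric).
  - rewrite <- (actZp_isometry g), <- actZp_mul by auto using Gamma_inv.
    rewrite (gmulVr _ G), actZp_one. apply (metric_sym _ _ dZp_metric).
Qed.

Lemma cost_mul x y z g h : Gamma g -> Gamma h ->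
  cost x z (mul g h) <= cost x y g + cost y z h.
Proof.
  intros Hg Hh. unfold cost. apply Rmax_lub.
  - eapply Rle_trans; [apply (metric_tri _ _ rho_metric _ (mul (fst y) h)) |].
    rewrite (gmulA _ G), rho_mul_r. apply Rplus_le_compat; apply Rmax_l.
  - rewrite actZp_mul by auto.
    eapply Rle_trans; [apply (metric_tri _ _ dZp_metric _ (actZp g (snd y))) |].
    rewrite actZp_isometry by auto. apply Rplus_le_compat; apply Rmax_r.
Qed.

Lemma pdist_le x x' g : Gamma g -> pdist x x' <= cost x x' g.
Proof. apply inf_on_le; [exists one; apply Gamma_one | intros; apply cost_nonneg]. Qed.

Lemma pdist_glb x x' c : (forall g, Gamma g -> c <= cost x x' g) -> c <= pdist x x'.
Proof. apply inf_on_glb; [exists one; apply Gamma_one | intros; apply cost_nonneg]. Qed.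

Lemma pdist_approx x x' e : 0 < e -> exists g, Gamma g /\ cost x x' g < pdist x x' + e.
Proof. apply inf_on_approx; [exists one; apply Gamma_one | intros; apply cost_nonneg]. Qed.

Lemma pdist_le_product x x' : pdist x x' <= Rmax (rho (fst x) (fst x')) (dZp (snd x) (snd x')).
Proof. rewrite <- cost_one. apply pdist_le, Gamma_one. Qed.

Lemma pdist_pseudometric : is_pseudometric pdist.
Proof.
  split; [| split].
  - intro x. apply Rle_antisym; [| apply pdist_glb; intros; apply cost_nonneg].
    eapply Rle_trans; [apply pdist_le_product |].
    rewrite (metric_refl _ _ rho_metric), (metric_refl _ _ dZp_metric), Rmax_left; lra.
  - assert (Hle : forall x x', pdist x' x <= pdist x x').
    { intros x x'. apply pdist_glb. intros g Hg.
      rewrite <- cost_inv by auto. apply pdist_le, Gamma_inv; auto. }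
    intros x x'. apply Rle_antisym; apply Hle.
  - intros x y z. apply Rle_plus_epsilon. intros e He.
    destruct (pdist_approx x y (e / 2)) as [g [Hg T1]]; [lra |].
    destruct (pdist_approx y z (e / 2)) as [h [Hh T2]]; [lra |].
    assert (T := cost_mul x y z g h Hg Hh).
    assert (T3 := pdist_le x z (mul g h) (Gamma_mul _ _ Hg Hh)). lra.
Qed.

Lemma pdist_bound x x' : pdist x x' <= Mz.
Proof.
  eapply Rle_trans; [apply pdist_le_product |].
  apply Rmax_lub; [apply truncated_dist_le | apply dist_opt_le]; auto.
Qed.

Lemma pdist_separable : metric_separable dK -> metric_separable dZ -> metric_separable pdist.
Proof.
  intros [sK HsK] HsepZ. destruct (dist_opt_separable _ dZ Mz HsepZ) as [sZ HsZ].
  exists (fun n => let (i, j) := Cantor.of_nat n in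
     match sK i, sZ j with Some k, Some a => Some (k, a) | _, _ => None end).
  intros [k a] e He. assert (Hc := truncated_scale_pos Mz eps0 HMz Heps0).
  destruct (HsK k (e / (Mz / eps0))) as [i [k' [Hi Hk]]]; [apply Rdiv_lt_0_compat; auto |].
  destruct (HsZ a e He) as [j [a' [Hj Ha]]].
  exists (Cantor.to_nat (i, j)), (k', a'). rewrite Cantor.cancel_of_to, Hi, Hj. split; auto.
  eapply Rle_lt_trans; [apply pdist_le_product |]. apply Rmax_lub_lt; auto. simpl.
  eapply Rle_lt_trans; [apply truncated_dist_lipschitz; auto |].
  apply (Rmult_lt_compat_l (Mz / eps0)) in Hk; [| exact Hc].
  replace (Mz / eps0 * (e / (Mz / eps0))) with e in Hk by (field; lra). exact Hk.
Qed.

Definition translate (g : K) (x : B) : B := (mul g (fst x), snd x).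

Lemma pdist_translate g x y : pdist (translate g x) (translate g y) = pdist x y.
Proof.
  unfold pdist. f_equal. apply functional_extensionality. intro h. unfold cost, translate; simpl.
  rewrite <- (gmulA _ G), rho_mul_l. reflexivity.
Qed.

Definition Y : Type := completion B pdist.
Definition dY : Y -> Y -> R := cdist B pdist.
Definition actY (g : K) : Y -> Y := completion_map B pdist (translate g) (pdist_translate g).
Definition embY (b : B) : Y := embed B pdist pdist_pseudometric b.
Definition embZ (z : Z) : Y := embY (one, Some z).

Lemma dY_metric : is_metric dY.
Proof. apply cdist_metric, pdist_pseudometric. Qed.

Lemma dY_embY a b : dY (embY a) (embY b) = pdist a b.
Proof. apply cdist_embed. Qed.

Lemma actY_embY g b : actY g (embY b) = embY (translate g b).
Proof. apply completion_map_embed. Qed.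

Lemma actY_isometry g y y' : dY (actY g y) (actY g y') = dY y y'.
Proof. apply completion_map_isometry, pdist_pseudometric. Qed.

Lemma actY_action : is_action_on G whole actY.
Proof.
  split.
  - intro y. apply completion_map_id; [apply pdist_pseudometric |].
    intros [k a]. unfold translate; simpl. rewrite (gmul1l _ G). reflexivity.
  - intros g h y _ _. symmetry. apply completion_map_comp; [apply pdist_pseudometric |].
    intros [k a]. unfold translate; simpl. rewrite (gmulA _ G). reflexivity.
Qed.

Lemma actY_lipschitz g g' y : dY (actY g y) (actY g' y) <= Mz / eps0 * dK g g'.
Proof.
  apply completion_map_close; [apply pdist_pseudometric |].
  intros [k a]. eapply Rle_trans; [apply pdist_le_product |]. unfold translate; simpl.
  rewrite (metric_refl _ _ dZp_metric). apply Rmax_lub.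
  - rewrite rho_mul_r. apply truncated_dist_lipschitz; auto.
  - apply Rmult_le_pos; [left; apply truncated_scale_pos; auto | apply (metric_nonneg _ _ HdK)].
Qed.

Lemma actY_continuous : action_continuous dK dY actY.
Proof.
  intros g y e He. assert (Hc := truncated_scale_pos Mz eps0 HMz Heps0).
  exists (e / (2 * (Mz / eps0 + 1))). split; [apply Rdiv_lt_0_compat; lra |].
  intros g' y' H1 H2.
  assert (Tr := metric_tri _ _ dY_metric (actY g y) (actY g' y) (actY g' y')).
  rewrite actY_isometry in Tr. assert (C := actY_lipschitz g g' y).
  set (delta := e / (2 * (Mz / eps0 + 1))) in *.
  assert (Hdelta : (Mz / eps0 + 1) * delta = e / 2) by (unfold delta; field; lra).
  assert (Mz / eps0 * dK g g' <= Mz / eps0 * delta) by (apply Rmult_le_compat_l; lra).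
  nra.
Qed.

Lemma embZ_isometry z z' : dY (embZ z) (embZ z') = dZ z z'.
Proof.
  unfold embZ. rewrite dY_embY. apply Rle_antisym.
  - eapply Rle_trans; [apply pdist_le_product |]. simpl.
    rewrite (metric_refl _ _ rho_metric). apply Rmax_lub; [apply (metric_nonneg _ _ HdZ) | lra].
  - apply pdist_glb. intros g Hg. unfold cost; simpl. rewrite (gmul1l _ G).
    destruct (classic (g = one)) as [-> | Hne].
    + rewrite (proj1 HactZ). apply Rmax_r.
    + assert (eps0 <= dK g one).
      { apply Rnot_lt_le. intro Hlt. apply Hne, Gamma_isolated_one; auto.
        rewrite (metric_sym _ _ HdK). exact Hlt. }
      unfold rho. rewrite truncated_dist_far by auto.
      eapply Rle_trans; [| apply Rmax_l]. auto.
Qed.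

Lemma embZ_equivariant g z : Gamma g -> embZ (actZ g z) = actY g (embZ z).
Proof.
  intro Hg. unfold embZ. rewrite actY_embY. apply embed_eq.
  apply Rle_antisym; [| apply pdist_glb; intros; apply cost_nonneg].
  eapply Rle_trans; [apply (pdist_le _ _ g Hg) |]. unfold cost, translate; simpl.
  rewrite (gmul1l _ G), (gmul1r _ G), (metric_refl _ _ rho_metric), (metric_refl _ _ HdZ).
  rewrite Rmax_left; lra.
Qed.

Lemma near_one_unique g h1 h2 : Gamma h1 -> Gamma h2 ->
  rho (mul g h1) one < Mz / 2 -> rho (mul g h2) one < Mz / 2 -> h1 = h2.
Proof.
  intros H1 H2 R1 R2.
  apply (truncated_dist_lt_half _ _ _ _ HMz Heps0) in R1, R2.
  assert (dK h1 h2 < eps0).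
  { rewrite <- (proj1 (Hbi g h1 h2)).
    assert (T := metric_tri _ _ HdK (mul g h1) one (mul g h2)).
    rewrite (metric_sym _ _ HdK one) in T. lra. }
  assert (E : mul (inv h2) h1 = one).
  { apply Gamma_isolated_one; [apply Gamma_mul; auto using Gamma_inv |].
    rewrite <- (gmulVl _ G h2), (proj1 (Hbi (inv h2) h2 h1)), (metric_sym _ _ HdK). auto. }
  rewrite <- (gmul1l _ G h1), <- (gmulVr _ G h2), <- (gmulA _ G), E. apply (gmul1r _ G).
Qed.

Hypothesis HfaithZ : action_faithful_on G Gamma actZ.

Lemma actY_faithful : action_faithful_on G whole actY.
Proof.
  intros g _ Hg.
  assert (P0 : forall a, pdist (g, a) (one, a) = 0).
  { intro a. assert (T := Hg (embY (one, a))).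
    rewrite actY_embY in T. unfold translate in T; simpl in T. rewrite (gmul1r _ G) in T.
    rewrite <- dY_embY, T. apply (metric_refl _ _ dY_metric). }
  destruct (pdist_approx (g, None) (one, None) (Mz / 2)) as [h [Hh Th]]; [lra |].
  rewrite P0 in Th. unfold cost in Th; cbn [fst snd] in Th.
  assert (Rh : rho (mul g h) one < Mz / 2)
    by (pose proof (Rmax_l (rho (mul g h) one) (dZp None (actZp h None))); lra).
  assert (Key : forall a e, 0 < e -> rho (mul g h) one <= e /\ dZp a (actZp h a) <= e).
  { intros a e He. set (e' := Rmin e (Mz / 2)).
    assert (He' : 0 < e') by (apply Rmin_glb_lt; lra).
    destruct (pdist_approx (g, a) (one, a) e' He') as [h' [Hh' Th']].
    rewrite P0 in Th'. unfold cost in Th'; cbn [fst snd] in Th'.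
    pose proof (Rmax_l (rho (mul g h') one) (dZp a (actZp h' a))).
    pose proof (Rmax_r (rho (mul g h') one) (dZp a (actZp h' a))).
    assert (e' <= Mz / 2) by apply Rmin_r. assert (e' <= e) by apply Rmin_l.
    replace h' with h in * by (apply (near_one_unique g); auto; lra).
    split; lra. }
  assert (E1 : mul g h = one).
  { apply (metric_eq _ _ rho_metric), Rle_antisym; [| apply (metric_nonneg _ _ rho_metric)].
    apply Rle_plus_epsilon. intros e He. rewrite Rplus_0_l. apply (Key None e He). }
  assert (E2 : h = one).
  { apply HfaithZ; auto. intro z. symmetry. apply (metric_eq _ _ HdZ), Rle_antisym;
      [| apply (metric_nonneg _ _ HdZ)].
    apply Rle_plus_epsilon. intros e He. rewrite Rplus_0_l. apply (Key (Some z) e He). }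
  rewrite E2, (gmul1r _ G) in E1. exact E1.
Qed.

Hypotheses (HsepK : metric_separable dK) (HsepZ : metric_separable dZ).

Lemma construction_spec :
    polish_metric_space dY /\ metric_bounded dY /\
    is_action_on G whole actY /\
    action_continuous dK dY actY /\
    action_faithful_on G whole actY /\
    action_isometric_on whole dY actY /\
    (forall z z', dY (embZ z) (embZ z') = dZ z z') /\
    (forall g z, Gamma g -> embZ (actZ g z) = actY g (embZ z)).
Proof.
  assert (Hp := pdist_pseudometric).
  repeat match goal with |- _ /\ _ => split end;
    auto using actY_action, actY_continuous, actY_faithful, embZ_isometry, embZ_equivariant.
  - split; [exact dY_metric | split; [apply cdist_separable, pdist_separable; auto |]].
    apply cdist_complete, Hp.
  - apply (cdist_bounded _ _ Hp Mz), pdist_bound.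
  - intros g y y' _. apply actY_isometry.
Qed.

End Construction.

Theorem lemma6p1
  (K : Type) (G : group_str K) (dK : K -> K -> R)
  (HK : polish_group_biinv_metric G dK)
  (Gamma : K -> Prop) (HGsub : is_subgroup G Gamma) (HGdisc : discrete_subset dK Gamma)
  (Z : Type) (dZ : Z -> Z -> R) (HZ : polish_metric_space dZ) (HZb : metric_bounded dZ)
  (actZ : K -> Z -> Z)
  (HactZ : is_action_on G Gamma actZ)
  (HfaithZ : action_faithful_on G Gamma actZ)
  (HisoZ : action_isometric_on Gamma dZ actZ) :
  exists (Y : Type) (dY : Y -> Y -> R) (actY : K -> Y -> Y) (e : Z -> Y),
    polish_metric_space dY /\ metric_bounded dY /\
    is_action_on G whole actY /\
    action_continuous dK dY actY /\
    action_faithful_on G whole actY /\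
    action_isometric_on whole dY actY /\
    (forall z z', dY (e z) (e z') = dZ z z') /\
    (forall g z, Gamma g -> e (actZ g z) = actY g (e z)).
Proof.
  destruct HK as [HdK [_ [[HsepK _] Hbi]]].
  destruct HZ as [HdZ [HsepZ _]].
  destruct (HGdisc (gone G) (proj1 HGsub)) as [eps0 [Heps0 Hisolated]].
  destruct HZb as [M HM].
  assert (HMz : 0 < Rabs M + 1) by (pose proof (Rabs_pos M); lra).
  assert (HMz_bound : forall z z', dZ z z' <= Rabs M + 1)
    by (intros z z'; pose proof (HM z z'); pose proof (Rle_abs M); lra).
  eexists _, _, _, _.
  exact (construction_spec K G dK HdK Hbi Gamma HGsub eps0 Heps0 Hisolated Z dZ _ HdZ HMz HMz_bound actZ HactZ HisoZ HfaithZ HsepK HsepZ).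
Qed.
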